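(* A standard ub-space $X$ is weakly u-II-compatible if and only if $\mathrm{PNS}(X)\subseteq\mathrm{FIN}(X)$.
   Context: Nonstandard framework: a standard universe with nonstandard extension $A\mapsto{}^*A$ satisfying transfer and sufficient saturation. An ub-space is a set $X$ with a uniformity $\mathcal{U}_X$ and a bornology $\mathcal{B}_X$ (a cover of $X$ closed under subsets and finite unions). $\mathrm{PNS}(X)=\bigcap_{U\in\mathcal{U}_X}\bigcup_{x\in X}{}^*U[x]$ (prenearstandard points), $\mathrm{FIN}(X)=\bigcup_{B\in\mathcal{B}_X}{}^*B$ (finite points). The topology and bornology of a space are II-compatible if each point has a bounded neighbourhood (for ub-spaces, w.r.t. the topology induced by the uniformity). An ub-space $X$ is weakly u-II-compatible if it is a subspace (uniform subspace, with bornology $\{B\cap X: B\in\mathcal{B}_{\bar X}\}$) of some Cauchy complete II-compatible ub-space $\bar X$. *)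

From Stdlib Require Import List Classical.
Import ListNotations.

Set Implicit Arguments.

Definition section {X : Type} (U : X * X -> Prop) (x : X) : X -> Prop :=
  fun y => U (x, y).

Definition is_filter {T : Type} (F : (T -> Prop) -> Prop) : Prop :=
  F (fun _ => True) /\
  (forall A B : T -> Prop, F A -> (forall t, A t -> B t) -> F B) /\
  (forall A B : T -> Prop, F A -> F B -> F (fun t => A t /\ B t)).

Definition proper_filter {T : Type} (F : (T -> Prop) -> Prop) : Prop :=
  is_filter F /\ ~ F (fun _ => False).

Definition is_uniformity {X : Type} (UX : (X * X -> Prop) -> Prop) : Prop :=
  is_filter UX /\
  (forall U, UX U -> forall x, U (x, x)) /\
  (forall U, UX U -> UX (fun p => U (snd p, fst p))) /\
  (forall U, UX U -> exists V, UX V /\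
      forall x y z, V (x, y) -> V (y, z) -> U (x, z)).

Definition is_bornology {X : Type} (BX : (X -> Prop) -> Prop) : Prop :=
  (forall x : X, exists B, BX B /\ B x) /\
  (forall A B : X -> Prop, BX B -> (forall x, A x -> B x) -> BX A) /\
  BX (fun _ => False) /\
  (forall A B : X -> Prop, BX A -> BX B -> BX (fun x => A x \/ B x)).

Definition ub_space {X : Type} (UX : (X * X -> Prop) -> Prop)
  (BX : (X -> Prop) -> Prop) : Prop :=
  is_uniformity UX /\ is_bornology BX.

Definition nbhd {X : Type} (UX : (X * X -> Prop) -> Prop) (x : X)
  (N : X -> Prop) : Prop :=
  exists U, UX U /\ forall y, section U x y -> N y.

Definition cauchy_filter {X : Type} (UX : (X * X -> Prop) -> Prop)
  (F : (X -> Prop) -> Prop) : Prop :=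
  proper_filter F /\
  forall U, UX U -> exists A, F A /\ forall x y, A x -> A y -> U (x, y).

Definition converges_to {X : Type} (UX : (X * X -> Prop) -> Prop)
  (F : (X -> Prop) -> Prop) (p : X) : Prop :=
  forall N, nbhd UX p N -> F N.

Definition cauchy_complete {X : Type} (UX : (X * X -> Prop) -> Prop) : Prop :=
  forall F, cauchy_filter UX F -> exists p, converges_to UX F p.

Definition II_compatible {X : Type} (UX : (X * X -> Prop) -> Prop)
  (BX : (X -> Prop) -> Prop) : Prop :=
  forall x, exists B, BX B /\ nbhd UX x B.

(* X is (via the injective map e, identifying X with a subset of Y) a
   subspace of the ub-space (Y, UY, BY): uniform subspace (trace uniformity)
   with the trace bornology. *)
Definition ub_subspace {X Y : Type} (e : X -> Y)
  (UX : (X * X -> Prop) -> Prop) (BX : (X -> Prop) -> Prop)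
  (UY : (Y * Y -> Prop) -> Prop) (BY : (Y -> Prop) -> Prop) : Prop :=
  (forall x1 x2, e x1 = e x2 -> x1 = x2) /\
  (forall U, UX U <-> exists V, UY V /\ forall x1 x2, U (x1, x2) <-> V (e x1, e x2)) /\
  (forall B, BX B <-> exists C, BY C /\ forall x, B x <-> C (e x)).

Definition weakly_u_II_compatible {X : Type} (UX : (X * X -> Prop) -> Prop)
  (BX : (X -> Prop) -> Prop) : Prop :=
  exists (Y : Type) (UY : (Y * Y -> Prop) -> Prop) (BY : (Y -> Prop) -> Prop)
         (e : X -> Y),
    ub_space UY BY /\ cauchy_complete UY /\ II_compatible UY BY /\
    ub_subspace e UX BX UY BY.

(* The nonstandard extension *T is modelled as the ultrapower T^I / Ult;
   points of *T are represented by functions I -> T (all notions below are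
   invariant under Ult-a.e. equality). *)

Definition ultrafilter {I : Type} (Ult : (I -> Prop) -> Prop) : Prop :=
  proper_filter Ult /\ forall A : I -> Prop, Ult A \/ Ult (fun i => ~ A i).

Definition star {I T : Type} (Ult : (I -> Prop) -> Prop) (A : T -> Prop)
  (f : I -> T) : Prop :=
  Ult (fun i => A (f i)).

(* Saturation hypothesis (enlargement property for X): every family of subsets
   of X with the finite intersection property has a common point in *X. *)
Definition fin_inter_prop {X : Type} (Fam : (X -> Prop) -> Prop) : Prop :=
  forall l : list (X -> Prop), Forall Fam l ->
    exists x, Forall (fun A => A x) l.

Definition saturated_for (X : Type) {I : Type} (Ult : (I -> Prop) -> Prop) : Prop :=
  forall Fam : (X -> Prop) -> Prop, fin_inter_prop Fam ->
    exists f : I -> X, forall A, Fam A -> star Ult A f.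

Definition PNS {I X : Type} (Ult : (I -> Prop) -> Prop)
  (UX : (X * X -> Prop) -> Prop) (f : I -> X) : Prop :=
  forall U, UX U -> exists x : X, star Ult (section U x) f.

Definition FIN {I X : Type} (Ult : (I -> Prop) -> Prop)
  (BX : (X -> Prop) -> Prop) (f : I -> X) : Prop :=
  exists B, BX B /\ star Ult B f.

(* If X sits in a complete II-compatible space, the image of the ultrafilter
   under a prenearstandard point f is a Cauchy filter there; its limit has a
   bounded neighbourhood B, so f lies in *(B ∩ X).
   Conversely, assume PNS(X) ⊆ FIN(X). Every Cauchy filter F on X then admits
   an entourage W and a bounded B containing all points W-close to F:
   otherwise the sets {x W-close to F, x ∉ B} have the finite intersection
   property, and saturation yields a point that is prenearstandard (it is
   infinitely close to F) but lies in no *B. Hence the space of all Cauchy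
   filters on X, uniformised by W-closeness and bounded by the families of
   filters sharing a bounded member, is complete and II-compatible, and it
   contains X through the principal filters. *)
From Stdlib Require Import List Classical.

Definition small {X : Type} (W : X * X -> Prop) (A : X -> Prop) : Prop :=
  forall a b, A a -> A b -> W (a, b).

Definition principal {X : Type} (x : X) : (X -> Prop) -> Prop := fun A => A x.

Definition close {X : Type} (W : X * X -> Prop) (F G : (X -> Prop) -> Prop) : Prop :=
  exists A B, F A /\ G B /\ forall a b, A a -> B b -> W (a, b).

Section Filters.
Context {T : Type} {F : (T -> Prop) -> Prop}.

Lemma filter_mono : is_filter F -> forall A B, F A -> (forall t, A t -> B t) -> F B.
Proof. intros (_ & Hmono & _); exact Hmono. Qed.

Lemma filter_meet : is_filter F -> forall A B, F A -> F B -> F (fun t => A t /\ B t).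
Proof. intros (_ & _ & Hmeet); exact Hmeet. Qed.

Lemma proper_filter_nonempty : proper_filter F -> forall A, F A -> exists t, A t.
Proof.
  intros [HF Hnot] A HA. apply NNPP; intros Hempty. apply Hnot.
  apply (filter_mono HF A); [exact HA|]. intros t At. apply Hempty. now exists t.
Qed.

Lemma proper_filter_meet_nonempty :
  proper_filter F -> forall A B, F A -> F B -> exists t, A t /\ B t.
Proof.
  intros HF A B HA HB. apply (proper_filter_nonempty HF).
  exact (filter_meet (proj1 HF) A B HA HB).
Qed.

Lemma proper_filter_fin_inter_prop : proper_filter F -> fin_inter_prop F.
Proof.
  intros HF l Hl. apply (proper_filter_nonempty HF).
  destruct HF as [HF _]. induction Hl as [|A l HA _ IH].
  - apply (filter_mono HF (fun _ => True)); [exact (proj1 HF)|constructor].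
  - apply (filter_mono HF _ _ (filter_meet HF _ _ HA IH)).
    intros t [At Hl]. now constructor.
Qed.

End Filters.

Section Entourages.
Context {X : Type} {UX : (X * X -> Prop) -> Prop}.
Hypothesis HU : is_uniformity UX.

Lemma entourage_top : UX (fun _ => True).
Proof. exact (proj1 (proj1 HU)). Qed.

Lemma entourage_mono {V W} : UX V -> (forall p, V p -> W p) -> UX W.
Proof. exact (filter_mono (proj1 HU) V W). Qed.

Lemma entourage_meet {V W} : UX V -> UX W -> UX (fun p => V p /\ W p).
Proof. exact (filter_meet (proj1 HU) V W). Qed.

Lemma entourage_refl {W} x : UX W -> W (x, x).
Proof. intros HW. exact (proj1 (proj2 HU) W HW x). Qed.

Lemma entourage_inv {W} : UX W -> UX (fun p => W (snd p, fst p)).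
Proof. exact (proj1 (proj2 (proj2 HU)) W). Qed.

Lemma entourage_half {W} : UX W ->
  exists V, UX V /\ forall a b c, V (a, b) -> V (b, c) -> W (a, c).
Proof. exact (proj2 (proj2 (proj2 HU)) W). Qed.

Lemma entourage_third {W} : UX W ->
  exists V, UX V /\ forall a b c d, V (a, b) -> V (b, c) -> V (c, d) -> W (a, d).
Proof.
  intros HW. destruct (entourage_half HW) as [V1 [HV1 HV1W]].
  destruct (entourage_half HV1) as [V [HV HVV1]].
  exists V; split; [exact HV|]. intros a b c d Vab Vbc Vcd.
  apply HV1W with c; [now apply HVV1 with b|].
  apply HVV1 with d; [exact Vcd|]. now apply entourage_refl.
Qed.

Lemma entourage_section_small {W} : UX W ->
  exists V, UX V /\ forall x, small W (section V x).
Proof.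
  intros HW. destruct (entourage_half HW) as [V [HV HVW]].
  exists (fun p => V p /\ V (snd p, fst p)). split.
  - exact (entourage_meet HV (entourage_inv HV)).
  - intros x a b [_ Vax] [Vxb _]. exact (HVW a x b Vax Vxb).
Qed.

End Entourages.

Lemma II_compatible_cover {Y : Type} {UY : (Y * Y -> Prop) -> Prop} {BY} :
  is_uniformity UY -> II_compatible UY BY -> forall y, exists B, BY B /\ B y.
Proof.
  intros HU HII y. destruct (HII y) as (B & HB & W & HW & HWB).
  exists B; split; [exact HB|]. apply HWB. exact (entourage_refl HU y HW).
Qed.

(** * Prenearstandard points of a subspace of a complete II-compatible space *)

Section Subspace.
Context {X Y I : Type} {e : X -> Y}.
Context {UX : (X * X -> Prop) -> Prop} {BX : (X -> Prop) -> Prop}.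
Context {UY : (Y * Y -> Prop) -> Prop} {BY : (Y -> Prop) -> Prop}.
Context {Ult : (I -> Prop) -> Prop}.
Hypothesis HUlt : proper_filter Ult.

Definition image_filter (f : I -> X) : (Y -> Prop) -> Prop :=
  fun A => Ult (fun i => A (e (f i))).

Lemma image_filter_cauchy {f} :
  is_uniformity UY -> ub_subspace e UX BX UY BY -> PNS Ult UX f ->
  cauchy_filter UY (image_filter f).
Proof.
  intros HUY (_ & Htrace & _) Hf. destruct HUlt as [(Htop & Hmono & Hmeet) Hnot].
  split; [split; [split; [exact Htop | split]|]|].
  - intros A B HA HAB. exact (Hmono _ _ HA (fun i => HAB (e (f i)))).
  - intros A B HA HB. exact (Hmeet _ _ HA HB).
  - exact Hnot.
  - intros V HV. destruct (entourage_section_small HUY HV) as [W [HW HWV]].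
    assert (HWX : UX (fun p => W (e (fst p), e (snd p)))).
    { apply Htrace. exists W. split; [exact HW | tauto]. }
    destruct (Hf _ HWX) as [x Hx].
    exists (section W (e x)). split; [exact Hx | apply HWV].
Qed.

End Subspace.

Lemma PNS_sub_FIN_of_weakly_u_II_compatible {X I : Type} {UX BX}
  {Ult : (I -> Prop) -> Prop} :
  proper_filter Ult -> weakly_u_II_compatible UX BX ->
  forall f : I -> X, PNS Ult UX f -> FIN Ult BX f.
Proof.
  intros HUlt (Y & UY & BY & e & [HUY _] & Hcomplete & HII & Hsub) f Hf.
  destruct (Hcomplete _ (image_filter_cauchy HUlt HUY Hsub Hf)) as [p Hp].
  destruct (HII p) as [C [HC HCp]].
  exists (fun x => C (e x)). split.
  - apply (proj2 (proj2 Hsub)). exists C. split; [exact HC | tauto].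
  - exact (Hp C HCp).
Qed.

Lemma close_principal {X : Type} (W : X * X -> Prop) a b :
  close W (principal a) (principal b) <-> W (a, b).
Proof.
  split.
  - intros (A & B & Aa & Bb & HAB). exact (HAB a b Aa Bb).
  - intros Wab. exists (eq a), (eq b). split; [reflexivity | split; [reflexivity|]].
    now intros ? ? <- <-.
Qed.

Lemma close_meet {X : Type} {V W : X * X -> Prop} {F G} :
  close (fun p => V p /\ W p) F G -> close V F G /\ close W F G.
Proof.
  intros (A & B & HA & HB & HAB).
  split; exists A, B; split; auto; split; auto; intros a b Aa Bb; apply HAB; auto.
Qed.

Lemma close_flip {X : Type} {W : X * X -> Prop} {F G} :
  close (fun p => W (snd p, fst p)) F G -> close W G F.
Proof.
  intros (A & B & HA & HB & HAB). exists B, A. split; [exact HB | split; [exact HA|]].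
  intros b a Bb Aa. exact (HAB a b Aa Bb).
Qed.

Lemma close_trans {X : Type} {V W : X * X -> Prop} {F G K} :
  proper_filter G -> (forall a b c, V (a, b) -> V (b, c) -> W (a, c)) ->
  close V F G -> close V G K -> close W F K.
Proof.
  intros HG HVW (A & B & HA & HB & HAB) (C & D & HC & HD & HCD).
  destruct (proper_filter_meet_nonempty HG B C HB HC) as [b [Bb Cb]].
  exists A, D. split; [exact HA | split; [exact HD|]].
  intros a d Aa Dd. apply HVW with b; auto.
Qed.

Lemma close_self {X : Type} {UX} (W : X * X -> Prop) {F} :
  cauchy_filter UX F -> UX W -> close W F F.
Proof. intros [_ Hsmall] HW. destruct (Hsmall W HW) as [A [HA HAW]]. now exists A, A. Qed.

Lemma close_filter_mem {X : Type} {W : X * X -> Prop} {B : X -> Prop} {F G} :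
  is_filter G -> (forall x, close W F (principal x) -> B x) -> close W F G -> G B.
Proof.
  intros HG HWB (A & Q & HA & HQ & HAQ). apply (filter_mono HG Q); [exact HQ|].
  intros x Qx. apply HWB. exists A, Q. auto.
Qed.

(** * The saturation argument *)

Section Saturation.
Context {X I : Type} {UX : (X * X -> Prop) -> Prop} {BX : (X -> Prop) -> Prop}.
Hypothesis HX : ub_space UX BX.
Context {Ult : (I -> Prop) -> Prop}.
Hypothesis HUlt : ultrafilter Ult.
Hypothesis Hsat : saturated_for X Ult.

Lemma PNS_of_star_close F (f : I -> X) : cauchy_filter UX F ->
  (forall V, UX V -> star Ult (fun y => close V F (principal y)) f) ->
  PNS Ult UX f.
Proof.
  intros [HF HFsmall] Hf U HU. destruct (entourage_half (proj1 HX) HU) as [V [HV HVU]].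
  destruct (HFsmall V HV) as [P [HP HPV]].
  destruct (proper_filter_nonempty HF P HP) as [x Px].
  exists x. apply (filter_mono (proj1 (proj1 HUlt)) _ _ (Hf V HV)).
  intros i (A & B & HA & HB & HAB).
  destruct (proper_filter_meet_nonempty HF A P HA HP) as [a [Aa Pa]].
  apply HVU with a; [exact (HPV x a Px Pa) | exact (HAB a (f i) Aa HB)].
Qed.

(* Generated by the sets {x W-close to F | x ∉ B}; it is proper exactly when
   no W and B as in [cauchy_filter_bounded_near] exist. *)
Definition near_outside_bounded F (A : X -> Prop) : Prop :=
  exists W B, UX W /\ BX B /\ forall x, close W F (principal x) -> ~ B x -> A x.

Lemma near_outside_bounded_filter F : is_filter (near_outside_bounded F).
Proof.
  destruct HX as [HU (_ & _ & Hempty & Hunion)]. split; [|split].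
  - exists (fun _ => True), (fun _ => False).
    split; [exact (entourage_top HU) | split; [exact Hempty | auto]].
  - intros A A' (W & B & HW & HB & HA) HAA'. exists W, B. auto.
  - intros A1 A2 (W1 & B1 & HW1 & HB1 & HA1) (W2 & B2 & HW2 & HB2 & HA2).
    exists (fun p => W1 p /\ W2 p), (fun x => B1 x \/ B2 x).
    split; [exact (entourage_meet HU HW1 HW2) | split; [exact (Hunion _ _ HB1 HB2)|]].
    intros x Hx Hout. destruct (close_meet Hx) as [Hx1 Hx2]. split.
    + apply HA1; [exact Hx1 | tauto].
    + apply HA2; [exact Hx2 | tauto].
Qed.

Lemma cauchy_filter_bounded_near :
  (forall f : I -> X, PNS Ult UX f -> FIN Ult BX f) ->
  forall F, cauchy_filter UX F ->
  exists W B, UX W /\ BX B /\ forall x, close W F (principal x) -> B x.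
Proof.
  intros Hfin F HF. apply NNPP; intros Hnone.
  destruct HX as [HU (_ & _ & Hempty & _)].
  assert (Hproper : proper_filter (near_outside_bounded F)).
  { split; [exact (near_outside_bounded_filter F)|].
    intros (W & B & HW & HB & HWB). apply Hnone. exists W, B.
    split; [exact HW | split; [exact HB|]].
    intros x Hx. apply NNPP. exact (HWB x Hx). }
  destruct (Hsat _ (proper_filter_fin_inter_prop Hproper)) as [f Hf].
  assert (Hpns : PNS Ult UX f).
  { apply (PNS_of_star_close F f HF). intros V HV. apply Hf.
    exists V, (fun _ => False). split; [exact HV | split; [exact Hempty | auto]]. }
  destruct (Hfin f Hpns) as [B [HB HBf]].
  assert (Houtside : star Ult (fun x => ~ B x) f).
  { apply Hf. exists (fun _ => True), B.
    split; [exact (entourage_top HU) | split; [exact HB | auto]]. }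
  destruct HUlt as [[HUltf Hnot] _]. apply Hnot.
  apply (filter_mono HUltf _ _ (filter_meet HUltf _ _ HBf Houtside)). tauto.
Qed.

End Saturation.

(** * The space of Cauchy filters *)

(* No Hausdorff quotient is taken: neither completeness nor the subspace
   relation requires the ambient space to be separated. *)
Section Completion.
Context {X : Type}.
Variable UX : (X * X -> Prop) -> Prop.
Hypothesis HU : is_uniformity UX.

Definition cauchy_filters : Type := {F : (X -> Prop) -> Prop | cauchy_filter UX F}.

Definition close_entourage (W : X * X -> Prop) (q : cauchy_filters * cauchy_filters) : Prop :=
  close W (proj1_sig (fst q)) (proj1_sig (snd q)).

Definition completion_unif (Z : cauchy_filters * cauchy_filters -> Prop) : Prop :=
  exists W, UX W /\ forall q, close_entourage W q -> Z q.

Definition completion_born (BX : (X -> Prop) -> Prop) (C : cauchy_filters -> Prop) : Prop :=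
  exists B, BX B /\ forall F, C F -> proj1_sig F B.

Lemma cauchy_filters_proper (F : cauchy_filters) : proper_filter (proj1_sig F).
Proof. exact (proj1 (proj2_sig F)). Qed.

Lemma principal_cauchy_filter x : cauchy_filter UX (principal x).
Proof.
  unfold principal. split; [split; [split; [exact I | split; auto]|auto]|].
  intros U HU'. exists (eq x). split; [reflexivity|].
  intros a b Ha Hb. subst. exact (entourage_refl HU _ HU').
Qed.

Definition principal_cauchy (x : X) : cauchy_filters :=
  exist _ (principal x) (principal_cauchy_filter x).

Lemma close_entourage_unif {W} : UX W -> completion_unif (close_entourage W).
Proof. intros HW. exists W. auto. Qed.

Lemma completion_uniformity : is_uniformity completion_unif.
Proof.
  split; [split; [|split]|split; [|split]].
  - exists (fun _ => True). split; [exact (entourage_top HU) | auto].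
  - intros Z Z' [W [HW HWZ]] HZZ'. exists W. auto.
  - intros Z1 Z2 [W1 [HW1 HWZ1]] [W2 [HW2 HWZ2]].
    exists (fun p => W1 p /\ W2 p). split; [exact (entourage_meet HU HW1 HW2)|].
    intros q Hq. destruct (close_meet Hq) as [Hq1 Hq2]. auto.
  - intros Z [W [HW HWZ]] F. apply HWZ. exact (close_self W (proj2_sig F) HW).
  - intros Z [W [HW HWZ]]. exists (fun p => W (snd p, fst p)).
    split; [exact (entourage_inv HU HW)|].
    intros [F G] HFG. apply (HWZ (G, F)). exact (close_flip HFG).
  - intros Z [W [HW HWZ]]. destruct (entourage_half HU HW) as [V [HV HVW]].
    exists (close_entourage V). split; [exact (close_entourage_unif HV)|].
    intros F G K HFG HGK. apply (HWZ (F, K)).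
    exact (close_trans (cauchy_filters_proper G) HVW HFG HGK).
Qed.

Definition small_union (V : X * X -> Prop) (S : cauchy_filters -> Prop) (x : X) : Prop :=
  exists H, S H /\ exists C, proj1_sig H C /\ small V C /\ C x.

Lemma small_union_mem {V S H} : UX V -> S H -> proj1_sig H (small_union V S).
Proof.
  intros HV HS. destruct (proj2_sig H) as [[HH _] Hsmall].
  destruct (Hsmall V HV) as [C [HC HCV]]. apply (filter_mono HH C); [exact HC|].
  intros x Cx. exists H. split; [exact HS|]. now exists C.
Qed.

Lemma small_union_close {V W : X * X -> Prop} {S K D} :
  (forall a b c d, V (a, b) -> V (b, c) -> V (c, d) -> W (a, d)) ->
  small (close_entourage V) S -> S K -> proj1_sig K D -> small V D ->
  forall x y, small_union V S x -> D y -> W (x, y).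
Proof.
  intros HVW HS HK HD HDV x y (H & HH & C & HC & HCV & Cx) Dy.
  destruct (HS H K HH HK) as (P & Q & HP & HQ & HPQ).
  destruct (proper_filter_meet_nonempty (cauchy_filters_proper H) C P HC HP) as [u [Cu Pu]].
  destruct (proper_filter_meet_nonempty (cauchy_filters_proper K) D Q HD HQ) as [v [Dv Qv]].
  apply HVW with u v; auto.
Qed.

Definition lim_filter (Phi : (cauchy_filters -> Prop) -> Prop) (A : X -> Prop) : Prop :=
  exists S, Phi S /\ forall H : cauchy_filters, S H -> proj1_sig H A.

Lemma small_union_lim {Phi V S} : UX V -> Phi S -> lim_filter Phi (small_union V S).
Proof. intros HV HS. exists S. split; [exact HS|]. intros H HH. exact (small_union_mem HV HH). Qed.

Lemma lim_filter_cauchy {Phi} :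
  cauchy_filter completion_unif Phi -> cauchy_filter UX (lim_filter Phi).
Proof.
  intros [HPhi HPhismall]. split; [split; [split; [|split]|]|].
  - exists (fun _ => True). split; [exact (proj1 (proj1 HPhi))|].
    intros H _. exact (proj1 (proj1 (cauchy_filters_proper H))).
  - intros A B [S [HS HSA]] HAB. exists S. split; [exact HS|].
    intros H HH. exact (filter_mono (proj1 (cauchy_filters_proper H)) A B (HSA H HH) HAB).
  - intros A B [S1 [HS1 HSA]] [S2 [HS2 HSB]].
    exists (fun H => S1 H /\ S2 H). split; [exact (filter_meet (proj1 HPhi) S1 S2 HS1 HS2)|].
    intros H [HH1 HH2].
    exact (filter_meet (proj1 (cauchy_filters_proper H)) A B (HSA H HH1) (HSB H HH2)).
  - intros [S [HS HSF]]. destruct (proper_filter_nonempty HPhi S HS) as [H HH].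
    exact (proj2 (cauchy_filters_proper H) (HSF H HH)).
  - intros U HU'. destruct (entourage_third HU HU') as [V [HV HVU]].
    destruct (HPhismall _ (close_entourage_unif HV)) as [S [HS HSV]].
    exists (small_union V S). split; [exact (small_union_lim HV HS)|].
    intros x y Hx (K & HK & D & HD & HDV & Dy).
    exact (small_union_close HVU HSV HK HD HDV x y Hx Dy).
Qed.

Lemma completion_complete : cauchy_complete completion_unif.
Proof.
  intros Phi HPhi. pose (lim := exist _ _ (lim_filter_cauchy HPhi) : cauchy_filters).
  exists lim. intros N (Z & (W & HW & HWZ) & HZN).
  destruct (entourage_third HU HW) as [V [HV HVW]].
  destruct (proj2 HPhi _ (close_entourage_unif HV)) as [S [HS HSV]].
  apply (filter_mono (proj1 (proj1 HPhi)) S); [exact HS|].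
  intros G HG. apply HZN, (HWZ (lim, G)).
  destruct (proj2 (proj2_sig G) V HV) as [D [HD HDV]].
  exists (small_union V S), D. split; [exact (small_union_lim HV HS)|split; [exact HD|]].
  exact (small_union_close HVW HSV HG HD HDV).
Qed.

Lemma completion_II_compatible {BX} :
  (forall F, cauchy_filter UX F ->
     exists W B, UX W /\ BX B /\ forall x, close W F (principal x) -> B x) ->
  II_compatible completion_unif (completion_born BX).
Proof.
  intros Hnear F. destruct (Hnear _ (proj2_sig F)) as (W & B & HW & HB & HWB).
  exists (fun G : cauchy_filters => proj1_sig G B). split.
  - exists B. auto.
  - exists (close_entourage W). split; [exact (close_entourage_unif HW)|].
    intros G HG. exact (close_filter_mem (proj1 (cauchy_filters_proper G)) HWB HG).
Qed.

Lemma completion_bornology {BX} :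
  is_bornology BX -> II_compatible completion_unif (completion_born BX) ->
  is_bornology (completion_born BX).
Proof.
  intros (_ & _ & Hempty & Hunion) HII.
  split; [|split; [|split]].
  - exact (II_compatible_cover completion_uniformity HII).
  - intros C C' [B [HB HC']] HCC'. exists B. auto.
  - exists (fun _ => False). split; [exact Hempty | tauto].
  - intros C1 C2 [B1 [HB1 HC1]] [B2 [HB2 HC2]].
    exists (fun x => B1 x \/ B2 x). split; [exact (Hunion _ _ HB1 HB2)|].
    intros F HF. pose proof (proj1 (cauchy_filters_proper F)) as HFf.
    destruct HF as [HF|HF].
    + apply (filter_mono HFf B1); [exact (HC1 F HF) | now left].
    + apply (filter_mono HFf B2); [exact (HC2 F HF) | now right].
Qed.

Lemma principal_ub_subspace {BX} :
  is_bornology BX ->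
  ub_subspace principal_cauchy UX BX completion_unif (completion_born BX).
Proof.
  intros (_ & Hsub & _). split; [|split].
  - intros x1 x2 Heq. apply (f_equal (@proj1_sig _ _)) in Heq.
    change (principal x1 = principal x2) in Heq.
    assert (Hx1 : principal x1 (eq x1)) by reflexivity.
    rewrite Heq in Hx1. exact Hx1.
  - intros U. split.
    + intros HU'. exists (close_entourage U). split; [exact (close_entourage_unif HU')|].
      intros x1 x2. symmetry. exact (close_principal U x1 x2).
    + intros (Z & (W & HW & HWZ) & HUZ). apply (entourage_mono HU HW).
      intros [a b] Wab. apply HUZ, (HWZ (principal_cauchy a, principal_cauchy b)).
      exact (proj2 (close_principal W a b) Wab).
  - intros B. split.
    + intros HB. exists (fun F : cauchy_filters => proj1_sig F B). split.
      * exists B. auto.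
      * intros x. reflexivity.
    + intros (C & (B' & HB' & HCB') & HBC). apply (Hsub B B'); [exact HB'|].
      intros x Bx. exact (HCB' (principal_cauchy x) (proj1 (HBC x) Bx)).
Qed.

End Completion.

Theorem theorem2p27 (X : Type) (UX : (X * X -> Prop) -> Prop)
  (BX : (X -> Prop) -> Prop) (HX : ub_space UX BX)
  (I : Type) (Ult : (I -> Prop) -> Prop)
  (HUlt : ultrafilter Ult) (Hsat : saturated_for X Ult) :
  weakly_u_II_compatible UX BX <->
  (forall f : I -> X, PNS Ult UX f -> FIN Ult BX f).
Proof.
  split.
  - exact (PNS_sub_FIN_of_weakly_u_II_compatible (proj1 HUlt)).
  - intros Hfin. pose proof HX as [HU HB].
    pose proof (completion_II_compatible UX
                  (cauchy_filter_bounded_near HX HUlt Hsat Hfin)) as HII.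
    exists (cauchy_filters UX), (completion_unif UX), (completion_born UX BX),
           (principal_cauchy UX HU).
    split; [split|split; [|split]].
    + exact (completion_uniformity UX HU).
    + exact (completion_bornology UX HU HB HII).
    + exact (completion_complete UX HU).
    + exact HII.
    + exact (principal_ub_subspace UX HU HB).
Qed.
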